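(* If $G$ is a subgroup of $PL_o(I)$ of depth $n$ for some positive integer $n$, then the derived subgroup $G'$ is a subgroup of $PL_o(I)$ of depth $n-1$.
   Context: $PL_o(I)$ is the group of orientation-preserving piecewise-linear homeomorphisms of $I=[0,1]$ with finitely many breaks in slope, acting on the right. An orbital of $g$ is a connected component of the set of points moved by $g$. A signed orbital of $G$ is a pair $(A,g)$ with $g\in G$ and $A$ an orbital of $g$. A tower of $G$ is a set of signed orbitals of $G$ with pairwise distinct orbitals which are pairwise comparable under inclusion; its height is its cardinality, and the depth of $G$ is the supremum of the heights of towers of $G$. *)

From Stdlib Require Import Reals List.
Open Scope R_scope.

(* Elements of PL_o(I) are represented as functions R -> R which are the
   identity outside I = [0,1] (so that group equality is function equality). *)
Definition PLo (f : R -> R) : Prop :=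
  (forall x, (x < 0 \/ 1 < x) -> f x = x) /\
  (forall x, 0 <= x <= 1 -> 0 <= f x <= 1) /\
  (forall y, 0 <= y <= 1 -> exists x, 0 <= x <= 1 /\ f x = y) /\
  (forall x y, 0 <= x -> x < y -> y <= 1 -> f x < f y) /\
  (* piecewise linear with finitely many breaks: affine on each
     [p i, p (i+1)] for a finite subdivision 0 = p 0 < ... < p n = 1
     (this also yields continuity) *)
  (exists (n : nat) (p a b : nat -> R),
      p 0%nat = 0 /\ p n = 1 /\
      (forall i, (i < n)%nat -> p i < p (S i)) /\
      (forall i x, (i < n)%nat -> p i <= x <= p (S i) -> f x = a i * x + b i)).

Definition is_PL_subgroup (G : (R -> R) -> Prop) : Prop :=
  (forall f, G f -> PLo f) /\
  G (fun x => x) /\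
  (forall f g, G f -> G g -> G (fun x => g (f x))) /\
  (forall f, G f -> exists h, G h /\ forall x, h (f x) = x /\ f (h x) = x).

(* Derived subgroup: generated by commutators f^-1 g^-1 f g (right action:
   apply f^-1 first). Inverses of commutators are commutators, so products
   of commutators (plus the identity) form the generated subgroup. *)
Inductive derived (G : (R -> R) -> Prop) : (R -> R) -> Prop :=
  | derived_id : derived G (fun x => x)
  | derived_comm : forall f g fi gi,
      G f -> G g -> G fi -> G gi ->
      (forall x, fi (f x) = x /\ f (fi x) = x) ->
      (forall x, gi (g x) = x /\ g (gi x) = x) ->
      derived G (fun x => g (f (gi (fi x))))
  | derived_mul : forall f g, derived G f -> derived G g ->
      derived G (fun x => g (f x)).

Definition moved (g : R -> R) (x : R) : Prop := 0 <= x <= 1 /\ g x <> x.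

Definition set_incl (A B : R -> Prop) : Prop := forall x, A x -> B x.
Definition set_eq (A B : R -> Prop) : Prop := forall x, A x <-> B x.

(* Connected subsets of R are exactly the intervals. *)
Definition connected_set (A : R -> Prop) : Prop :=
  forall x y z, A x -> A y -> x <= z <= y -> A z.

Definition orbital (g : R -> R) (A : R -> Prop) : Prop :=
  (exists x, A x) /\ set_incl A (moved g) /\ connected_set A /\
  (forall B, set_incl A B -> set_incl B (moved g) -> connected_set B ->
     set_eq A B).

Definition tower (G : (R -> R) -> Prop) (t : list ((R -> Prop) * (R -> R)))
  : Prop :=
  (forall Ag, In Ag t -> G (snd Ag) /\ orbital (snd Ag) (fst Ag)) /\
  (forall i j, (i < length t)%nat -> (j < length t)%nat -> i <> j ->
     let A := fst (nth i t (fun _ => False, fun x => x)) in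
     let B := fst (nth j t (fun _ => False, fun x => x)) in
     ~ set_eq A B /\ (set_incl A B \/ set_incl B A)).

Definition has_tower_of_height (G : (R -> R) -> Prop) (k : nat) : Prop :=
  exists t, tower G t /\ length t = k.

(* depth G = n (n finite): some tower has height n and none has height n+1
   (hence, since subsets of towers are towers, every tower, finite or
   infinite, has at most n elements). *)
Definition depth_eq (G : (R -> R) -> Prop) (n : nat) : Prop :=
  has_tower_of_height G n /\ ~ has_tower_of_height G (S n).

(* Orbitals of elements of PL_o(I) are open intervals with fixed ends.

   Lower bound: let B = (c, d), an orbital of g, be the largest orbital of a tower of G of maximal
   height n; every other orbital A = (a, b), of f, lies strictly inside B.  Maximality of B forces f
   to fix c, and finite depth forces f to be the identity near c: otherwise f has an orbital (c, x)
   with x < d which a power of g or g^-1 pushes into itself, and conjugating yields towers of any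
   height.  Likewise b < d, so a power of g or g^-1 moves [a, b] into the region where f is the
   identity, and the commutator of f with it agrees with f^-1 on [a, b]: A is an orbital of an
   element of G'.

   Upper bound: let (c, d) be the largest orbital of a tower of G' of height n.  Commutators have
   slope 1 at global fixed points, so c is moved by G.  The supremum of the G-orbit of c is a global
   fixed point at or beyond d, and from it one builds an element of G with an orbital containing c
   and (c, d), which extends the tower to height n + 1 in G. *)

From Stdlib Require Import Reals List Lra Lia Classical.
Open Scope R_scope.

Definition inverses (f g : R -> R) : Prop := forall x, g (f x) = x /\ f (g x) = x.

Lemma inverses_sym f g : inverses f g -> inverses g f.
Proof. intros H x; split; apply H. Qed.

Lemma inverses_fixed f g p : inverses f g -> f p = p -> g p = p.
Proof. intros H Hp; rewrite <- Hp at 1; apply H. Qed.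

Lemma inverses_moved f g y : inverses f g -> f y <> y -> g y <> y.
Proof. intros H Hy Hg; apply Hy; rewrite <- Hg at 1; apply H. Qed.

Lemma subdivision_piece_right (q : nat -> R) p m : q 0%nat <= p < q m ->
  exists i, (i < m)%nat /\ q i <= p < q (S i).
Proof.
  induction m as [|m IH]; intros Hp; [lra|].
  destruct (Rlt_le_dec p (q m)) as [Hlt|Hge].
  - destruct IH as [i [Hi Hpi]]; [lra|]. exists i; split; [lia|auto].
  - exists m; split; [lia|lra].
Qed.

Lemma subdivision_piece_left (q : nat -> R) p m : q 0%nat < p <= q m ->
  exists i, (i < m)%nat /\ q i < p <= q (S i).
Proof.
  induction m as [|m IH]; intros Hp; [lra|].
  destruct (Rle_lt_dec p (q m)) as [Hle|Hgt].
  - destruct IH as [i [Hi Hpi]]; [lra|]. exists i; split; [lia|auto].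
  - exists m; split; [lia|lra].
Qed.

Lemma affine_nonzero_near u v p : u * p + v <> 0 ->
  exists d, 0 < d /\ forall y, p - d <= y <= p + d -> u * y + v <> 0.
Proof.
  intros Hp. pose proof (Rabs_pos_lt _ Hp) as Hpos. pose proof (Rabs_pos u) as Hu.
  exists (Rabs (u * p + v) / (2 * (Rabs u + 1))).
  split; [apply Rdiv_lt_0_compat; lra|]. intros y Hy Hy0.
  set (d := Rabs (u * p + v) / (2 * (Rabs u + 1))) in Hy.
  assert (Hd : d * (2 * (Rabs u + 1)) = Rabs (u * p + v)) by (unfold d; field; lra).
  assert (Habs : Rabs (u * p + v) = Rabs u * Rabs (p - y)).
  { rewrite <- Rabs_mult. f_equal. lra. }
  assert (Rabs (p - y) <= d) by (apply Rabs_le; lra).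
  assert (Rabs u * Rabs (p - y) <= Rabs u * d) by (apply Rmult_le_compat_l; lra).
  nra.
Qed.

Section PLoFacts.

Variable f : R -> R.
Hypothesis Hf : PLo f.

Lemma PLo_fixed_out x : (x < 0 \/ 1 < x) -> f x = x.
Proof. apply Hf. Qed.

Lemma PLo_maps_I x : 0 <= x <= 1 -> 0 <= f x <= 1.
Proof. apply Hf. Qed.

Lemma PLo_lt x y : 0 <= x -> x < y -> y <= 1 -> f x < f y.
Proof. apply Hf. Qed.

Lemma PLo_le x y : 0 <= x -> x <= y -> y <= 1 -> f x <= f y.
Proof.
  intros H0 Hxy H1. destruct (Req_dec x y) as [->|]; [lra|].
  left; apply PLo_lt; lra.
Qed.

Lemma PLo_preimage_I x : 0 <= f x <= 1 -> 0 <= x <= 1.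
Proof.
  intros H. destruct (Rle_lt_dec 0 x); destruct (Rle_lt_dec x 1); try lra;
    rewrite PLo_fixed_out in H; lra.
Qed.

Lemma PLo_fixed_0 : f 0 = 0.
Proof.
  destruct Hf as [_ [HI [Honto _]]]. destruct (Honto 0 ltac:(lra)) as [x [Hx Hfx]].
  destruct (Req_dec x 0) as [->|]; auto.
  pose proof (PLo_lt 0 x ltac:(lra) ltac:(lra) ltac:(lra)). pose proof (HI 0 ltac:(lra)). lra.
Qed.

Lemma PLo_fixed_1 : f 1 = 1.
Proof.
  destruct Hf as [_ [HI [Honto _]]]. destruct (Honto 1 ltac:(lra)) as [x [Hx Hfx]].
  destruct (Req_dec x 1) as [->|]; auto.
  pose proof (PLo_lt x 1 ltac:(lra) ltac:(lra) ltac:(lra)). pose proof (HI 1 ltac:(lra)). lra.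
Qed.

Lemma PLo_affine_right p : 0 <= p < 1 ->
  exists e a b, 0 < e /\ p + e <= 1 /\ forall y, p <= y <= p + e -> f y = a * y + b.
Proof.
  intros Hp. destruct Hf as [_ [_ [_ [_ [N [q [a [b [Hq0 [HqN [_ Haff]]]]]]]]]]].
  destruct (subdivision_piece_right q p N ltac:(lra)) as [i [Hi Hpi]].
  set (e := Rmin (q (S i) - p) (1 - p)).
  assert (e <= q (S i) - p) by apply Rmin_l. assert (e <= 1 - p) by apply Rmin_r.
  exists e, (a i), (b i). split; [apply Rmin_glb_lt; lra|]. split; [lra|].
  intros y Hy. apply Haff; auto; lra.
Qed.

Lemma PLo_affine_left p : 0 < p <= 1 ->
  exists e a b, 0 < e /\ 0 <= p - e /\ forall y, p - e <= y <= p -> f y = a * y + b.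
Proof.
  intros Hp. destruct Hf as [_ [_ [_ [_ [N [q [a [b [Hq0 [HqN [_ Haff]]]]]]]]]]].
  destruct (subdivision_piece_left q p N ltac:(lra)) as [i [Hi Hpi]].
  set (e := Rmin (p - q i) p).
  assert (e <= p - q i) by apply Rmin_l. assert (e <= p) by apply Rmin_r.
  exists e, (a i), (b i). split; [apply Rmin_glb_lt; lra|]. split; [lra|].
  intros y Hy. apply Haff; auto; lra.
Qed.

Lemma PLo_moved_nbhd p : 0 <= p <= 1 -> f p <> p ->
  exists d, 0 < d /\ forall y, p - d <= y <= p + d -> f y <> y.
Proof.
  intros Hp Hfp.
  assert (p <> 0) by (intros ->; rewrite PLo_fixed_0 in Hfp; auto).
  assert (p <> 1) by (intros ->; rewrite PLo_fixed_1 in Hfp; auto).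
  destruct (PLo_affine_right p ltac:(lra)) as [e1 [a1 [b1 [He1 [_ Hf1]]]]].
  destruct (PLo_affine_left p ltac:(lra)) as [e2 [a2 [b2 [He2 [_ Hf2]]]]].
  destruct (affine_nonzero_near (a1 - 1) b1 p) as [d1 [Hd1 Hl1]].
  { rewrite (Hf1 p) in Hfp by lra. lra. }
  destruct (affine_nonzero_near (a2 - 1) b2 p) as [d2 [Hd2 Hl2]].
  { rewrite (Hf2 p) in Hfp by lra. lra. }
  exists (Rmin (Rmin e1 d1) (Rmin e2 d2)).
  pose proof (Rmin_l (Rmin e1 d1) (Rmin e2 d2)). pose proof (Rmin_r (Rmin e1 d1) (Rmin e2 d2)).
  pose proof (Rmin_l e1 d1). pose proof (Rmin_r e1 d1).
  pose proof (Rmin_l e2 d2). pose proof (Rmin_r e2 d2).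
  split; [repeat apply Rmin_glb_lt; lra|]. intros y Hyp Hfy.
  destruct (Rle_lt_dec p y).
  - rewrite Hf1 in Hfy by lra. apply (Hl1 y); lra.
  - rewrite Hf2 in Hfy by lra. apply (Hl2 y); lra.
Qed.

End PLoFacts.

Lemma PLo_inverse_lt h hi y : PLo h -> PLo hi -> inverses h hi -> 0 <= y <= 1 ->
  h y < y -> y < hi y.
Proof.
  intros Ph Phi Hinv Hy Hhy. apply Rnot_le_lt; intros Hle.
  pose proof (PLo_maps_I hi Phi y Hy).
  pose proof (PLo_le h Ph (hi y) y ltac:(lra) Hle ltac:(lra)). rewrite (proj2 (Hinv y)) in *. lra.
Qed.

Lemma bounded_sup (E : R -> Prop) B : (exists x, E x) -> (forall x, E x -> x <= B) ->
  exists m, m <= B /\ (forall x, E x -> x <= m) /\ (forall e, 0 < e -> exists x, E x /\ m - e < x).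
Proof.
  intros Hne HB. destruct (completeness E) as [m [Hub Hlub]]; [exists B; exact HB|exact Hne|].
  exists m. split; [apply Hlub; exact HB|]. split; [exact Hub|].
  intros e He. apply NNPP; intros Hno. assert (is_upper_bound E (m - e)).
  { intros x Hx. apply Rnot_lt_le; intros Hlt. apply Hno; exists x; auto. }
  specialize (Hlub _ H). lra.
Qed.

Lemma bounded_inf (E : R -> Prop) B : (exists x, E x) -> (forall x, E x -> B <= x) ->
  exists m, B <= m /\ (forall x, E x -> m <= x) /\ (forall e, 0 < e -> exists x, E x /\ x < m + e).
Proof.
  intros [z Hz] HB. destruct (bounded_sup (fun y => E (- y)) (- B)) as [m [HmB [Hub Happ]]].
  - exists (- z). rewrite Ropp_involutive; auto.
  - intros x Hx. specialize (HB _ Hx). lra.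
  - exists (- m). split; [lra|]. split.
    + intros x Hx. assert (E (- - x)) by (rewrite Ropp_involutive; auto). specialize (Hub _ H). lra.
    + intros e He. destruct (Happ e He) as [x [Hx Hxm]]. exists (- x). split; [auto|lra].
Qed.

Lemma connected_union A B : connected_set A -> connected_set B -> (exists z, A z /\ B z) ->
  connected_set (fun y => A y \/ B y).
Proof.
  intros HA HB [z [Az Bz]] x y w Hx Hy Hw.
  destruct Hx as [Ax|Bx], Hy as [Ay|By].
  - left; apply (HA x y); auto.
  - destruct (Rle_lt_dec w z); [left; apply (HA x z)|right; apply (HB z y)]; auto; lra.
  - destruct (Rle_lt_dec w z); [right; apply (HB x z)|left; apply (HA z y)]; auto; lra.
  - right; apply (HB x y); auto.
Qed.

Lemma orbital_set_eq f A B : orbital f A -> set_eq A B -> orbital f B.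
Proof.
  intros [[z Hz] [Hm [Hc Hmax]]] HAB. split; [|split; [|split]].
  - exists z; apply HAB; auto.
  - intros x Hx; apply Hm, HAB; auto.
  - intros x y w Hx Hy Hw. apply HAB, (Hc x y); auto; apply HAB; auto.
  - intros C HBC HCm HCc.
    assert (HAC : set_eq A C) by (apply Hmax; auto; intros y Hy; apply HBC, HAB; auto).
    intros x. specialize (HAC x). specialize (HAB x). tauto.
Qed.

Lemma orbital_absorbs f A C x : orbital f A -> A x ->
  connected_set C -> set_incl C (moved f) -> C x -> set_incl C A.
Proof.
  intros [_ [HAm [HAc Hmax]]] Ax HCc HCm Cx y Cy.
  assert (HU : set_eq A (fun y => A y \/ C y)).
  { apply Hmax.
    - intros z Hz; left; auto.
    - intros z [Hz|Hz]; auto.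
    - apply connected_union; eauto. }
  apply HU; right; auto.
Qed.

Definition orbital_ends (f : R -> R) (a b : R) : Prop :=
  0 <= a /\ a < b /\ b <= 1 /\ f a = a /\ f b = b /\ forall y, a < y < b -> f y <> y.

Lemma orbital_of_ends f a b : orbital_ends f a b -> orbital f (fun y => a < y < b).
Proof.
  intros [Ha [Hab [Hb [Hfa [Hfb Hm]]]]]. split; [|split; [|split]].
  - exists ((a + b) / 2); lra.
  - intros x Hx; split; [lra|]. apply Hm; auto.
  - intros x y w Hx Hy Hw; lra.
  - intros C HAC HCm HCc x. split; [apply HAC|]. intros Cx.
    assert (Cmid : C ((a + b) / 2)) by (apply HAC; lra).
    destruct (Rle_lt_dec x a).
    { assert (C a) by (apply (HCc x ((a + b) / 2)); auto; lra).
      destruct (HCm a); auto; contradiction. }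
    destruct (Rle_lt_dec b x).
    { assert (C b) by (apply (HCc ((a + b) / 2) x); auto; lra).
      destruct (HCm b); auto; contradiction. }
    lra.
Qed.

Lemma orbital_around_moved_point f A p : PLo f -> orbital f A -> 0 <= p <= 1 -> f p <> p ->
  (forall e, 0 < e -> exists x, A x /\ p - e < x < p + e) ->
  exists d, 0 < d /\ A (p - d) /\ A (p + d).
Proof.
  intros Hf HA Hp Hfp Happ.
  assert (p <> 0) by (intros ->; rewrite PLo_fixed_0 in Hfp; auto).
  assert (p <> 1) by (intros ->; rewrite PLo_fixed_1 in Hfp; auto).
  destruct (PLo_moved_nbhd f Hf p Hp Hfp) as [del [Hdel Hnbhd]].
  set (d := Rmin del (Rmin p (1 - p)) / 2).
  pose proof (Rmin_l del (Rmin p (1 - p))). pose proof (Rmin_r del (Rmin p (1 - p))).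
  pose proof (Rmin_l p (1 - p)). pose proof (Rmin_r p (1 - p)).
  assert (0 < Rmin del (Rmin p (1 - p))) by (repeat apply Rmin_glb_lt; lra).
  destruct (Happ d ltac:(unfold d; lra)) as [x [Ax Hx]].
  assert (Hsub : set_incl (fun y => p - d <= y <= p + d) A).
  { apply (orbital_absorbs f A _ x HA Ax).
    - intros u v w Hu Hv Hw; lra.
    - intros y Hy. split; [unfold d in *; lra|]. apply Hnbhd; unfold d in *; lra.
    - lra. }
  exists d; split; [lra|]. split; apply Hsub; lra.
Qed.

Lemma orbital_ends_of_orbital f A : PLo f -> orbital f A ->
  exists a b, orbital_ends f a b /\ set_eq A (fun y => a < y < b).
Proof.
  intros Hf HA. pose proof HA as [[z Az] [Hm [Hc _]]].
  assert (HI : forall x, A x -> 0 <= x <= 1) by (intros x Hx; apply Hm; auto).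
  assert (Hmv : forall x, A x -> f x <> x) by (intros x Hx; apply Hm; auto).
  destruct (bounded_sup A 1) as [b [Hb1 [Hub Hbapp]]]; [eauto|intros x Hx; apply HI; auto|].
  destruct (bounded_inf A 0) as [a [Ha0 [Hlb Haapp]]]; [eauto|intros x Hx; apply HI; auto|].
  assert (Hfb : f b = b).
  { apply NNPP; intros Hfb. pose proof (Hub z Az). pose proof (Hlb z Az). pose proof (HI z Az).
    destruct (orbital_around_moved_point f A b Hf HA ltac:(lra) Hfb) as [d [Hd [_ Abd]]].
    - intros e He. destruct (Hbapp e He) as [x [Ax Hx]]. pose proof (Hub x Ax).
      exists x; split; [auto|lra].
    - pose proof (Hub _ Abd). lra. }
  assert (Hfa : f a = a).
  { apply NNPP; intros Hfa. pose proof (Hub z Az). pose proof (Hlb z Az). pose proof (HI z Az).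
    destruct (orbital_around_moved_point f A a Hf HA ltac:(lra) Hfa) as [d [Hd [Aad _]]].
    - intros e He. destruct (Haapp e He) as [x [Ax Hx]]. pose proof (Hlb x Ax).
      exists x; split; [auto|lra].
    - pose proof (Hlb _ Aad). lra. }
  assert (Hin : forall x, A x -> a < x < b).
  { intros x Ax. pose proof (Hub x Ax). pose proof (Hlb x Ax).
    assert (x <> a) by (intros ->; apply (Hmv a); auto).
    assert (x <> b) by (intros ->; apply (Hmv b); auto). lra. }
  assert (Hout : forall x, a < x < b -> A x).
  { intros x Hx. destruct (Haapp (x - a)) as [x1 [Ax1 Hx1]]; [lra|].
    destruct (Hbapp (b - x)) as [x2 [Ax2 Hx2]]; [lra|].
    apply (Hc x1 x2); auto; lra. }
  pose proof (Hin z Az).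
  exists a, b. split; [|split; [apply Hin|apply Hout]].
  repeat split; auto; lra.
Qed.

Definition moved_component (f : R -> R) (q : R) : R -> Prop :=
  fun y => exists C, connected_set C /\ set_incl C (moved f) /\ C q /\ C y.

Lemma moved_component_orbital f q : moved f q -> orbital f (moved_component f q).
Proof.
  intros Hq.
  assert (Hsing : connected_set (fun y => y = q) /\ set_incl (fun y => y = q) (moved f)).
  { split; [intros x y w -> -> Hw; lra|intros x ->; auto]. }
  split; [|split; [|split]].
  - exists q, (fun y => y = q). tauto.
  - intros x [C [_ [HC [_ Cx]]]]; apply HC; auto.
  - intros x y w [C1 [Hc1 [Hm1 [C1q C1x]]]] [C2 [Hc2 [Hm2 [C2q C2y]]]] Hw.
    destruct (Rle_lt_dec w q).
    + exists C1. refine (conj Hc1 (conj Hm1 (conj C1q _))). apply (Hc1 x q); auto; lra.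
    + exists C2. refine (conj Hc2 (conj Hm2 (conj C2q _))). apply (Hc2 q y); auto; lra.
  - intros D HD HDm HDc x. split; [apply HD|]. intros Dx.
    exists D. refine (conj HDc (conj HDm (conj _ Dx))). apply HD. exists (fun y => y = q). tauto.
Qed.

Lemma moved_point_orbital f q : PLo f -> moved f q -> exists a b, orbital_ends f a b /\ a < q < b.
Proof.
  intros Hf Hq. pose proof (moved_component_orbital f q Hq) as HO.
  destruct (orbital_ends_of_orbital f _ Hf HO) as [a [b [Hab HE]]].
  exists a, b. split; auto. apply HE.
  exists (fun y => y = q). split; [intros x y w -> -> Hw; lra|]. split; [intros x ->; auto|]. tauto.
Qed.

Lemma connected_preimage k C : PLo k -> set_incl C (fun y => 0 <= y <= 1) -> connected_set C ->
  connected_set (fun y => C (k y)).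
Proof.
  intros Pk HCI HCc x y w Hx Hy Hw.
  pose proof (PLo_preimage_I k Pk x (HCI _ Hx)). pose proof (PLo_preimage_I k Pk y (HCI _ Hy)).
  apply (HCc (k x) (k y)); auto. split; apply PLo_le; auto; lra.
Qed.

Lemma orbital_conj f E h hi : PLo h -> PLo hi -> inverses h hi ->
  orbital f E -> orbital (fun x => h (f (hi x))) (fun y => E (hi y)).
Proof.
  intros Ph Phi Hinv [[z Ez] [Hm [Hc Hmax]]].
  assert (Hmv : forall y, moved (fun x => h (f (hi x))) y <-> moved f (hi y)).
  { intros y; unfold moved; split; intros [HI Hne].
    - split; [apply PLo_maps_I; auto|]. intros He; apply Hne. rewrite He. apply Hinv.
    - split; [apply (PLo_preimage_I hi); auto|]. intros He. apply Hne.
      rewrite <- (proj1 (Hinv (f (hi y)))), He. reflexivity. }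
  split; [|split; [|split]].
  - exists (h z). rewrite (proj1 (Hinv z)); auto.
  - intros y Hy. apply Hmv, Hm; auto.
  - apply connected_preimage; auto. intros y Ey. apply (Hm y Ey).
  - intros D HD HDm HDc.
    assert (HE : set_eq E (fun u => D (h u))).
    { apply Hmax.
      - intros u Eu. apply HD. rewrite (proj1 (Hinv u)); auto.
      - intros u Du. specialize (HDm _ Du). apply Hmv in HDm. rewrite (proj1 (Hinv u)) in HDm; auto.
      - apply connected_preimage; auto. intros u Du. apply (HDm u Du). }
    intros y. rewrite (HE (hi y)), (proj2 (Hinv y)). tauto.
Qed.

Lemma iter_inverses h hi m : inverses h hi -> inverses (Nat.iter m h) (Nat.iter m hi).
Proof.
  intros Hinv. induction m as [|m IH]; intros x; [split; reflexivity|].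
  split; rewrite Nat.iter_succ_r, Nat.iter_succ.
  - rewrite (proj1 (Hinv _)). apply IH.
  - rewrite (proj2 (Hinv _)). apply IH.
Qed.

Lemma iter_fixed (h : R -> R) p m : h p = p -> Nat.iter m h p = p.
Proof. intros Hp. apply (Nat.iter_invariant m R h (fun y : R => y = p)); [intros y ->|]; auto. Qed.

Lemma inverses_comp f fi g gi : inverses f fi -> inverses g gi ->
  inverses (fun x => g (f x)) (fun x => fi (gi x)).
Proof.
  intros Hf Hg x. rewrite (proj1 (Hg _)), (proj2 (Hf _)). split; [apply Hf|apply Hg].
Qed.

Section Subgroup.

Variable G : (R -> R) -> Prop.
Hypothesis HG : is_PL_subgroup G.

Lemma sg_PLo f : G f -> PLo f.
Proof. apply HG. Qed.

Lemma sg_id : G (fun x => x).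
Proof. apply HG. Qed.

Lemma sg_comp f g : G f -> G g -> G (fun x => g (f x)).
Proof. apply HG. Qed.

Lemma sg_inv f : G f -> exists fi, G fi /\ inverses f fi.
Proof. apply HG. Qed.

Lemma sg_iter h m : G h -> G (Nat.iter m h).
Proof.
  intros Hh. induction m as [|m IH]; [exact sg_id|]. exact (sg_comp _ _ IH Hh).
Qed.

Lemma derived_incl h : derived G h -> G h.
Proof.
  induction 1; auto using sg_id, sg_comp.
Qed.

Lemma derived_is_PL_subgroup : is_PL_subgroup (derived G).
Proof.
  split; [|split; [|split]].
  - intros f Hf. apply sg_PLo, derived_incl; auto.
  - apply derived_id.
  - intros f g Hf Hg. apply derived_mul; auto.
  - induction 1 as [|f g fi gi Hf Hg Hfi Hgi Hinvf Hinvg|f g _ [fi [Hfi Hinvf]] _ [gi [Hgi Hinvg]]].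
    + exists (fun x => x). split; [apply derived_id|]. split; reflexivity.
    + exists (fun x => f (g (fi (gi x)))). split; [apply (derived_comm G g f gi fi); auto|].
      exact (inverses_comp _ _ g gi (inverses_comp _ _ f fi
        (inverses_comp fi f gi g (inverses_sym _ _ Hinvf) (inverses_sym _ _ Hinvg)) Hinvf) Hinvg).
    + exists (fun x => fi (gi x)). split; [apply (derived_mul G gi fi); auto|].
      apply inverses_comp; auto.
Qed.

End Subgroup.

Definition germ (f : R -> R) (p s a e : R) : Prop :=
  0 < e /\ forall t, 0 <= t <= e -> f (p + s * t) = p + s * (a * t).

Lemma germ_right f p : PLo f -> 0 <= p < 1 -> f p = p -> exists a e, 0 < a /\ germ f p 1 a e.
Proof.
  intros Hf Hp Hfp. destruct (PLo_affine_right f Hf p Hp) as [e [a [b [He [He1 Haff]]]]].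
  assert (Hb : b = p - a * p) by (rewrite Haff in Hfp by lra; lra).
  pose proof (PLo_lt f Hf p (p + e) ltac:(lra) ltac:(lra) ltac:(lra)) as Hinc.
  rewrite !Haff in Hinc by lra.
  exists a, e. split; [nra|]. split; [auto|]. intros t Ht. rewrite Haff by lra. subst b; ring.
Qed.

Lemma germ_left f p : PLo f -> 0 < p <= 1 -> f p = p -> exists a e, 0 < a /\ germ f p (-1) a e.
Proof.
  intros Hf Hp Hfp. destruct (PLo_affine_left f Hf p Hp) as [e [a [b [He [He1 Haff]]]]].
  assert (Hb : b = p - a * p) by (rewrite Haff in Hfp by lra; lra).
  pose proof (PLo_lt f Hf (p - e) p ltac:(lra) ltac:(lra) ltac:(lra)) as Hinc.
  rewrite !Haff in Hinc by lra.
  exists a, e. split; [nra|]. split; [auto|]. intros t Ht. rewrite Haff by lra. subst b; ring.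
Qed.

Lemma germ_comp f g p s a b e1 e2 : germ f p s a e1 -> germ g p s b e2 -> 0 <= a ->
  exists e, germ (fun x => g (f x)) p s (b * a) e.
Proof.
  intros [He1 Hf] [He2 Hg] Ha.
  set (e := Rmin e1 (e2 / (a + 1))).
  assert (e <= e1) by apply Rmin_l. assert (He2' : e <= e2 / (a + 1)) by apply Rmin_r.
  assert (0 < e2 / (a + 1)) by (apply Rdiv_lt_0_compat; lra).
  exists e. split; [apply Rmin_glb_lt; lra|]. intros t Ht.
  assert (a * t <= e2).
  { apply Rmult_le_compat_r with (r := a + 1) in He2'; [|lra].
    replace (e2 / (a + 1) * (a + 1)) with e2 in He2' by (field; lra). nra. }
  rewrite Hf, Hg by nra. f_equal; ring.
Qed.

Lemma germ_inverse_slope f fi p s a a' e e' : s <> 0 -> germ f p s a e -> germ fi p s a' e' ->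
  0 <= a -> (forall x, fi (f x) = x) -> a' * a = 1.
Proof.
  intros Hs Hf Hfi Ha Hinv. destruct (germ_comp f fi p s a a' e e' Hf Hfi Ha) as [e'' [He Hc]].
  specialize (Hc e'' ltac:(lra)). rewrite Hinv in Hc.
  assert (HH : s * e'' * (a' * a - 1) = 0) by lra.
  apply Rmult_integral in HH as [HH|HH]; [apply Rmult_integral in HH; lra|lra].
Qed.

Lemma germ_iter h p s b e : germ h p s b e -> 0 <= b <= 1 ->
  forall M, germ (Nat.iter M h) p s (b ^ M) e.
Proof.
  intros [He Hh] Hb M. split; auto. induction M as [|M IH]; intros t Ht.
  - simpl. ring.
  - rewrite Nat.iter_succ, IH by auto.
    pose proof (pow_le b M ltac:(lra)). pose proof (pow_incr b 1 M ltac:(lra)). rewrite pow1 in *.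
    rewrite Hh by nra. simpl. f_equal; ring.
Qed.

Lemma derived_germ_one G p h : is_PL_subgroup G -> (forall g, G g -> g p = p) -> 0 <= p < 1 ->
  derived G h -> exists e, germ h p 1 1 e.
Proof.
  intros HG Hfix Hp.
  assert (Hgerm : forall g, G g -> exists a e, 0 < a /\ germ g p 1 a e).
  { intros g Hg. apply germ_right; [apply (sg_PLo G HG)| |apply Hfix]; auto. }
  induction 1 as [|f g fi gi Hf Hg Hfi Hgi Hinvf Hinvg|f g _ [e1 Hf] _ [e2 Hg]].
  - exists 1. split; [lra|]. intros t _. ring.
  - destruct (Hgerm f Hf) as [af [ef [Haf Gf]]]. destruct (Hgerm g Hg) as [ag [eg [Hag Gg]]].
    destruct (Hgerm fi Hfi) as [afi [efi [Hafi Gfi]]].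
    destruct (Hgerm gi Hgi) as [agi [egi [Hagi Ggi]]].
    assert (E1 : afi * af = 1).
    { apply (germ_inverse_slope f fi p 1 af afi ef efi); auto; try lra. intros; apply Hinvf. }
    assert (E2 : agi * ag = 1).
    { apply (germ_inverse_slope g gi p 1 ag agi eg egi); auto; try lra. intros; apply Hinvg. }
    destruct (germ_comp _ _ _ _ _ _ _ _ Gfi Ggi ltac:(lra)) as [e1 C1].
    destruct (germ_comp _ _ _ _ _ _ _ _ C1 Gf ltac:(nra)) as [e2 C2].
    destruct (germ_comp _ _ _ _ _ _ _ _ C2 Gg ltac:(nra)) as [e3 C3].
    replace (ag * (af * (agi * afi))) with 1 in C3 by nra. eauto.
  - destruct (germ_comp _ _ _ _ _ _ _ _ Hf Hg ltac:(lra)) as [e Hc].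
    rewrite Rmult_1_l in Hc. eauto.
Qed.

Definition orbital_covers (G : (R -> R) -> Prop) (c d : R) : Prop :=
  exists k B, G k /\ orbital k B /\ B c /\ forall y, c < y < d -> B y.

Section Covering.

Variable G : (R -> R) -> Prop.
Hypothesis HG : is_PL_subgroup G.

Lemma moved_segment_covers k c d : G k -> c < d ->
  (forall y, c <= y < d -> 0 <= y <= 1 /\ k y <> y) -> orbital_covers G c d.
Proof.
  intros Hk Hcd Hmv.
  destruct (moved_point_orbital k c (sg_PLo G HG k Hk)) as [a [b [Hab Hc]]]; [apply Hmv; lra|].
  assert (Hdb : d <= b).
  { apply Rnot_lt_le; intros Hbd. destruct Hab as [_ [_ [_ [_ [Hkb _]]]]].
    destruct (Hmv b) as [_ Hne]; [lra|contradiction]. }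
  exists k, (fun y => a < y < b). split; [auto|]. split; [apply orbital_of_ends; auto|].
  split; [lra|]. intros y Hy; lra.
Qed.

Lemma orbit_sup_fixed c : 0 <= c <= 1 ->
  exists s, c <= s <= 1 /\ (forall f, G f -> f s = s) /\
    (forall e, 0 < e -> exists k, G k /\ s - e < k c).
Proof.
  intros Hc.
  destruct (bounded_sup (fun y => exists k, G k /\ y = k c) 1) as [s [Hs1 [Hub Happ]]].
  { exists c, (fun x => x). split; [apply sg_id; auto|reflexivity]. }
  { intros x [k [Hk ->]]. apply (PLo_maps_I k (sg_PLo G HG k Hk) c Hc). }
  assert (Hcs : c <= s) by (apply Hub; exists (fun x => x); split; [apply sg_id; auto|reflexivity]).
  assert (Hdown : forall f, G f -> f s <= s).
  { intros f Hf. apply Rnot_lt_le; intros Hlt.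
    destruct (sg_inv G HG f Hf) as [fi [Hfi Hinv]].
    pose proof (sg_PLo G HG f Hf) as Pf. pose proof (sg_PLo G HG fi Hfi) as Pfi.
    pose proof (PLo_maps_I f Pf s ltac:(lra)).
    set (t := (s + f s) / 2).
    assert (Hfit : fi t < s).
    { rewrite <- (proj1 (Hinv s)). apply (PLo_lt fi Pfi); unfold t; lra. }
    pose proof (PLo_maps_I fi Pfi t ltac:(unfold t; lra)).
    destruct (Happ (s - fi t)) as [x [[k [Hk ->]] Hx]]; [lra|].
    pose proof (PLo_maps_I k (sg_PLo G HG k Hk) c Hc).
    pose proof (PLo_lt f Pf (fi t) (k c) ltac:(lra) ltac:(lra) ltac:(lra)) as Hlt'.
    rewrite (proj2 (Hinv t)) in Hlt'.
    assert (f (k c) <= s) by (apply Hub; exists (fun x => f (k x)); split; [apply sg_comp|]; auto).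
    unfold t in *; lra. }
  exists s. split; [lra|]. split.
  - intros f Hf. apply Rle_antisym; auto.
    destruct (sg_inv G HG f Hf) as [fi [Hfi Hinv]].
    pose proof (Hdown fi Hfi).
    pose proof (PLo_maps_I fi (sg_PLo G HG fi Hfi) s ltac:(lra)).
    rewrite <- (proj2 (Hinv s)) at 1. apply (PLo_le f (sg_PLo G HG f Hf)); lra.
  - intros e He. destruct (Happ e He) as [x [[k [Hk ->]] Hx]]. eauto.
Qed.

Lemma left_contraction g c d : G g -> orbital_ends g c d ->
  exists h bh eh, G h /\ 0 < bh < 1 /\ germ h d (-1) bh eh.
Proof.
  intros Hg [Hc [Hcd [Hd [_ [Hgd Hmv]]]]]. pose proof (sg_PLo G HG g Hg) as Pg.
  destruct (germ_left g d Pg ltac:(lra) Hgd) as [b [eg [Hb Gg]]].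
  assert (Hb1 : b <> 1).
  { intros ->. destruct Gg as [Heg Gg].
    set (t := Rmin eg (d - c) / 2). pose proof (Rmin_l eg (d - c)). pose proof (Rmin_r eg (d - c)).
    assert (0 < Rmin eg (d - c)) by (apply Rmin_glb_lt; lra).
    apply (Hmv (d + -1 * t)); [unfold t; lra|]. rewrite Gg by (unfold t; lra). ring. }
  destruct (Rlt_le_dec b 1) as [Hlt|Hge]; [exists g, b, eg; auto|].
  destruct (sg_inv G HG g Hg) as [gi [Hgi Hinv]].
  destruct (germ_left gi d (sg_PLo G HG gi Hgi) ltac:(lra) (inverses_fixed g gi d Hinv Hgd))
    as [b' [eg' [Hb' Ggi]]].
  assert (b' * b = 1).
  { apply (germ_inverse_slope g gi d (-1) b b' eg eg'); auto; try lra. intros; apply Hinv. }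
  exists gi, b', eg'. split; [auto|]. split; [nra|auto].
Qed.

(* A high power of the contraction [h] after [k] moves every point of [[c, d)] upwards. *)
Lemma contraction_covers h k c d bh eh : G h -> G k -> 0 <= c < d -> d <= 1 -> k d = d ->
  0 < bh < 1 -> germ h d (-1) bh eh -> d - eh < k c -> orbital_covers G c d.
Proof.
  intros Hh Hk Hc Hd Hkd Hbh Gh Hkc. pose proof (sg_PLo G HG k Hk) as Pk.
  destruct (germ_left k d Pk ltac:(lra) Hkd) as [kap [ek [Hkap [Hek Gk]]]].
  pose proof (proj1 Gh) as Heh.
  set (r := Rmin (/ kap) (ek / eh)).
  assert (Hr : 0 < r) by (apply Rmin_glb_lt; [apply Rinv_0_lt_compat|apply Rdiv_lt_0_compat]; auto).
  destruct (pow_lt_1_zero bh ltac:(rewrite Rabs_right; lra) r Hr) as [M HM].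
  specialize (HM M (le_n M)). rewrite Rabs_right in HM by (apply Rle_ge, pow_le; lra).
  assert (HM1 : bh ^ M * kap < 1).
  { assert (r <= / kap) by apply Rmin_l.
    apply Rmult_lt_compat_r with (r := kap) in HM; [|lra].
    rewrite <- (Rinv_l kap) by lra. apply Rlt_le_trans with (r * kap); [lra|].
    apply Rmult_le_compat_r; lra. }
  assert (HM2 : bh ^ M * eh < ek).
  { assert (r <= ek / eh) by apply Rmin_r.
    apply Rmult_lt_compat_r with (r := eh) in HM; [|lra].
    replace ek with (ek / eh * eh) by (field; lra). apply Rlt_le_trans with (r * eh); [lra|].
    apply Rmult_le_compat_r; lra. }
  pose proof (pow_le bh M ltac:(lra)).
  destruct (germ_iter h d (-1) bh eh Gh ltac:(lra) M) as [_ GhM].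
  apply (moved_segment_covers (fun x => Nat.iter M h (k x))); [|lra|].
  { apply (sg_comp G HG); [auto|apply (sg_iter G HG); auto]. }
  intros y Hy. split; [lra|]. apply Rgt_not_eq.
  pose proof (PLo_le k Pk c y ltac:(lra) ltac:(lra) ltac:(lra)).
  pose proof (PLo_lt k Pk y d ltac:(lra) ltac:(lra) ltac:(lra)).
  replace (k y) with (d + -1 * (d - k y)) by ring. rewrite GhM by lra.
  destruct (Rle_lt_dec (d - ek) y).
  - specialize (Gk (d - y) ltac:(lra)). replace (d + -1 * (d - y)) with y in Gk by ring.
    rewrite Gk.
    assert (bh ^ M * kap * (d - y) < d - y) by
      (apply Rmult_lt_compat_r with (r := d - y) in HM1; lra).
    nra.
  - assert (bh ^ M * (d - k y) <= bh ^ M * eh) by (apply Rmult_le_compat_l; lra). lra.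
Qed.

Lemma orbital_covers_of_moved_end g c d : G g -> orbital_ends g c d ->
  (exists f, G f /\ f c <> c) -> orbital_covers G c d.
Proof.
  intros Hg Hends [f [Hf Hfc]]. pose proof Hends as [Hc [Hcd [Hd [_ [Hgd Hmv]]]]].
  destruct (orbit_sup_fixed c ltac:(lra)) as [s [Hs [Hfix Happ]]].
  assert (Hsc : s <> c) by (intros ->; apply Hfc, Hfix; auto).
  assert (Hds : d <= s) by (apply Rnot_lt_le; intros Hsd; apply (Hmv s); [lra|apply Hfix; auto]).
  destruct (Rle_lt_dec s d) as [Hsd|Hsd].
  - replace s with d in * by lra.
    destruct (left_contraction g c d Hg Hends) as [h [bh [eh [Hh [Hbh Gh]]]]].
    destruct (Happ eh (proj1 Gh)) as [k [Hk Hkc]].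
    apply (contraction_covers h k c d bh eh); auto; lra.
  - destruct (Happ (s - d) ltac:(lra)) as [k [Hk Hkc]].
    apply (moved_segment_covers k); auto. intros y Hy. split; [lra|].
    pose proof (PLo_le k (sg_PLo G HG k Hk) c y ltac:(lra) ltac:(lra) ltac:(lra)). lra.
Qed.

End Covering.

Lemma iter_tends_to_fixed_point h hi c b : PLo h -> PLo hi -> inverses h hi ->
  0 <= c < b -> b <= 1 -> h c = c -> h b < b -> (forall y, c < y <= b -> h y <> y) ->
  forall e, 0 < e -> exists m, Nat.iter m h b < c + e.
Proof.
  intros Ph Phi Hinv Hcb Hb Hhc Hhb Hmv e He.
  assert (Hrng : forall m, c < Nat.iter m h b <= b).
  { induction m as [|m IH]; [simpl; lra|]. rewrite Nat.iter_succ.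
    pose proof (PLo_lt h Ph c (Nat.iter m h b) ltac:(lra) ltac:(lra) ltac:(lra)).
    pose proof (PLo_le h Ph (Nat.iter m h b) b ltac:(lra) ltac:(lra) ltac:(lra)). lra. }
  destruct (bounded_inf (fun y => exists m, y = Nat.iter m h b) c) as [t [Htc [Hlb Happ]]].
  { exists b, 0%nat; reflexivity. }
  { intros x [m ->]. specialize (Hrng m); lra. }
  assert (Htb : t <= b) by (apply Hlb; exists 0%nat; reflexivity).
  enough (t = c) as ->.
  { destruct (Happ e He) as [x [[m ->] Hx]]. eauto. }
  apply NNPP; intros Htc'.
  destruct (Rtotal_order (h t) t) as [Hlt|[Heq|Hgt]]; [| apply (Hmv t); auto; lra |].
  - (* some iterate lies below [hi t > t], so the next one lies below [t] *)
    pose proof (PLo_inverse_lt h hi t Ph Phi Hinv ltac:(lra) Hlt).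
    pose proof (PLo_maps_I hi Phi t ltac:(lra)).
    destruct (Happ (hi t - t)) as [x [[m ->] Hx]]; [lra|]. specialize (Hrng m).
    pose proof (PLo_lt h Ph (Nat.iter m h b) (hi t) ltac:(lra) ltac:(lra) ltac:(lra)).
    rewrite (proj2 (Hinv t)) in *.
    assert (t <= Nat.iter (S m) h b) by (apply Hlb; eauto). rewrite Nat.iter_succ in *. lra.
  - assert (Hall : forall m, h t <= Nat.iter m h b).
    { induction m as [|m IH].
      - pose proof (PLo_le h Ph t b ltac:(lra) Htb Hb). simpl; lra.
      - rewrite Nat.iter_succ.
        apply (PLo_le h Ph); [lra|apply Hlb; eauto|specialize (Hrng m); lra]. }
    destruct (Happ (h t - t)) as [x [[m ->] Hx]]; [lra|]. specialize (Hall m). lra.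
Qed.

Lemma list_relabel {A B C} (P : A -> C -> Prop) (l : list (A * B)) :
  (forall x, In x l -> exists c, P (fst x) c) ->
  exists l' : list (A * C), map fst l' = map fst l /\ forall y, In y l' -> P (fst y) (snd y).
Proof.
  induction l as [|x l IH]; intros H.
  - exists nil; split; [reflexivity|intros y []].
  - destruct (H x (or_introl eq_refl)) as [c Hc].
    destruct IH as [l' [Hl' Hall]]; [intros y Hy; apply H; right; auto|].
    exists ((fst x, c) :: l'). split; [simpl; rewrite Hl'; reflexivity|].
    intros y [<-|Hy]; auto.
Qed.

Lemma nth_remove {X} (l : list X) k i d : (k < length l)%nat ->
  nth i (firstn k l ++ skipn (S k) l) d = nth (if (i <? k)%nat then i else S i) l d.
Proof.
  intros Hk. destruct (Nat.ltb_spec i k).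
  - rewrite app_nth1, nth_firstn by (rewrite length_firstn; lia).
    destruct (Nat.ltb_spec i k); [reflexivity|lia].
  - rewrite app_nth2, nth_skipn; rewrite length_firstn; [f_equal|]; lia.
Qed.

Definition tower_orbital (t : list ((R -> Prop) * (R -> R))) (i : nat) : R -> Prop :=
  fst (nth i t (fun _ => False, fun x => x)).

Section Towers.

Variable G : (R -> R) -> Prop.

Lemma tower_pair t i j : tower G t -> (i < length t)%nat -> (j < length t)%nat -> i <> j ->
  ~ set_eq (tower_orbital t i) (tower_orbital t j) /\
  (set_incl (tower_orbital t i) (tower_orbital t j) \/
   set_incl (tower_orbital t j) (tower_orbital t i)).
Proof. intros [_ Ht]; apply Ht. Qed.

Lemma tower_nth t i : tower G t -> (i < length t)%nat ->
  G (snd (nth i t (fun _ => False, fun x => x))) /\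
  orbital (snd (nth i t (fun _ => False, fun x => x))) (tower_orbital t i).
Proof. intros [Ht _] Hi. apply Ht, nth_In, Hi. Qed.

Lemma tower_incl G' t : (forall h, G h -> G' h) -> tower G t -> tower G' t.
Proof.
  intros HGG' [Hmem Hpair]. split; auto. intros x Hx. destruct (Hmem x Hx); auto.
Qed.

Lemma tower_top t : tower G t -> (0 < length t)%nat ->
  exists k, (k < length t)%nat /\ forall x, In x t -> set_incl (fst x) (tower_orbital t k).
Proof.
  intros Ht Hl.
  assert (Hm : forall m, (0 < m <= length t)%nat -> exists k, (k < m)%nat /\
    forall j, (j < m)%nat -> set_incl (tower_orbital t j) (tower_orbital t k)).
  { induction m as [|m IH]; intros Hm; [lia|]. destruct (Nat.eq_dec m 0) as [->|Hm0].
    - exists 0%nat. split; [lia|]. intros j Hj x Hx. replace j with 0%nat in Hx by lia; auto.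
    - destruct IH as [k [Hk Hkj]]; [lia|].
      destruct (tower_pair t k m Ht ltac:(lia) ltac:(lia) ltac:(lia)) as [_ [Hkm|Hmk]].
      + exists m. split; [lia|]. intros j Hj.
        destruct (Nat.eq_dec j m) as [->|]; [intros x; auto|].
        intros x Hx. apply Hkm, (Hkj j); auto; lia.
      + exists k. split; [lia|]. intros j Hj.
        destruct (Nat.eq_dec j m) as [->|]; [auto|apply Hkj; lia]. }
  destruct (Hm (length t)) as [k [Hk Htop]]; [lia|].
  exists k. split; auto. intros x Hx.
  destruct (In_nth t x (fun _ => False, fun x => x) Hx) as [j [Hj <-]]. apply Htop, Hj.
Qed.

Lemma tower_cons t B p : tower G t -> G p -> orbital p B ->
  (forall x, In x t -> set_incl (fst x) B /\ ~ set_eq (fst x) B) -> tower G ((B, p) :: t).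
Proof.
  intros [Hmem Hpair] Hp HB Hbelow. split.
  - intros x [<-|Hx]; auto.
  - intros i j Hi Hj Hij. simpl in Hi, Hj.
    destruct i as [|i], j as [|j]; [lia| | |apply Hpair; lia]; simpl.
    + destruct (Hbelow (nth j t (fun _ => False, fun x => x))) as [Hin Hne]; [apply nth_In; lia|].
      split; auto. intros Heq; apply Hne; intros x; specialize (Heq x); tauto.
    + destruct (Hbelow (nth i t (fun _ => False, fun x => x))); [apply nth_In; lia|]. auto.
Qed.

Lemma tower_remove t k : tower G t -> (k < length t)%nat ->
  exists t', tower G t' /\ length t' = pred (length t) /\
    forall x, In x t' -> exists j, (j < length t)%nat /\ j <> k /\
      x = nth j t (fun _ => False, fun x => x).
Proof.
  intros [Hmem Hpair] Hk.
  set (skip := fun i => if (i <? k)%nat then i else S i).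
  assert (Hskip : forall i, (i < pred (length t))%nat -> (skip i < length t)%nat /\ skip i <> k).
  { intros i Hi. unfold skip. destruct (Nat.ltb_spec i k); lia. }
  assert (Hinj : forall i j, skip i = skip j -> i = j).
  { intros i j. unfold skip. destruct (Nat.ltb_spec i k), (Nat.ltb_spec j k); lia. }
  set (t' := firstn k t ++ skipn (S k) t).
  assert (Hlen : length t' = pred (length t)).
  { unfold t'. rewrite length_app, length_firstn, length_skipn. lia. }
  assert (Hnth : forall i d, nth i t' d = nth (skip i) t d) by (intros; apply nth_remove; auto).
  assert (Hfrom : forall x, In x t' -> exists j, (j < length t)%nat /\ j <> k /\
    x = nth j t (fun _ => False, fun x => x)).
  { intros x Hx. destruct (In_nth t' x (fun _ => False, fun x => x) Hx) as [i [Hi <-]].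
    exists (skip i). rewrite Hnth. split; [|split]; auto; apply Hskip; lia. }
  exists t'. split; [split|split; auto].
  - intros x Hx. destruct (Hfrom x Hx) as [j [Hj [_ ->]]]. apply Hmem, nth_In, Hj.
  - intros i j Hi Hj Hij. cbv zeta. rewrite !Hnth.
    apply Hpair; try apply Hskip; try lia. intros He; apply Hij, Hinj, He.
Qed.

Lemma tower_relabel G' t : tower G t -> (forall x, In x t -> exists w, G' w /\ orbital w (fst x)) ->
  has_tower_of_height G' (length t).
Proof.
  intros [_ Hpair] Hrel.
  destruct (list_relabel (fun A w => G' w /\ orbital w A) t Hrel) as [l [Hfst Hl]].
  assert (Hlen : length l = length t) by (rewrite <- (length_map fst l), Hfst, length_map; auto).
  assert (Hnth : forall i, fst (nth i l (fun _ => False, fun x => x)) = tower_orbital t i).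
  { intros i. unfold tower_orbital. rewrite <- !(map_nth fst), Hfst. reflexivity. }
  exists l. split; [split|exact Hlen].
  - exact Hl.
  - intros i j Hi Hj Hij. cbv zeta. rewrite !Hnth. apply Hpair; lia.
Qed.

End Towers.

Lemma tower_extend_covering G t k c d : tower G t ->
  (forall x, In x t -> set_incl (fst x) (tower_orbital t k)) ->
  set_eq (tower_orbital t k) (fun y => c < y < d) -> orbital_covers G c d ->
  has_tower_of_height G (S (length t)).
Proof.
  intros Ht Htop HBk [p [B [Hp [HB [Bc HcdB]]]]].
  exists ((B, p) :: t). split; [|reflexivity].
  apply tower_cons; auto. intros x Hx.
  assert (Hsub : set_incl (fst x) (fun y => c < y < d)) by
    (intros y Hy; apply HBk, (Htop x Hx), Hy).
  split.
  - intros y Hy. apply HcdB, Hsub, Hy.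
  - intros Heq. apply Heq, Hsub in Bc. lra.
Qed.

Section NestedConjugates.

Variable G : (R -> R) -> Prop.
Hypothesis HG : is_PL_subgroup G.
Variables f h hi : R -> R.
Variable E : R -> Prop.
Hypotheses (Hf : G f) (HE : orbital f E) (Hh : G h) (Hhi : G hi) (Hinv : inverses h hi).
Hypothesis HEhi : forall y, E y -> E (hi y).
Variable p0 : R.
Hypotheses (Hp0 : E (hi p0)) (Hp0' : ~ E p0).

Let conj_orbital (m : nat) : R -> Prop := fun y => E (Nat.iter m hi y).

Lemma conj_orbital_strict_incl m N : (m < N)%nat ->
  set_incl (conj_orbital m) (conj_orbital N) /\ ~ set_eq (conj_orbital m) (conj_orbital N).
Proof.
  intros HmN. unfold conj_orbital.
  assert (HEiter : forall k y, E y -> E (Nat.iter k hi y)).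
  { intros k y Hy. apply (Nat.iter_invariant k R hi E HEhi y Hy). }
  replace N with ((N - m) + m)%nat by lia. split.
  - intros y Hy. rewrite Nat.iter_add. auto.
  - intros Heq. apply Hp0'. specialize (Heq (Nat.iter m h p0)). simpl in Heq.
    rewrite (proj1 (iter_inverses h hi m Hinv p0)), Nat.iter_add,
      (proj1 (iter_inverses h hi m Hinv p0)) in Heq.
    apply Heq. replace (N - m)%nat with (S (N - m - 1)) by lia.
    rewrite Nat.iter_succ_r. auto.
Qed.

Lemma nested_conjugates_towers N : has_tower_of_height G N.
Proof.
  set (sig m := (conj_orbital m, fun x => Nat.iter m h (f (Nat.iter m hi x)))).
  enough (Hall : exists t, tower G t /\ length t = N /\
    forall x, In x t -> exists m, (m < N)%nat /\ x = sig m).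
  { destruct Hall as [t [Ht [Hlen _]]]. exists t; auto. }
  induction N as [|N [t [Ht [Hlen Hsig]]]].
  - exists nil. split; [split; [intros _ []|simpl; lia]|split; [reflexivity|intros _ []]].
  - exists (sig N :: t). split; [|split; [simpl; lia|]].
    + apply tower_cons; auto.
      * apply (sg_comp G HG); [apply (sg_comp G HG)|]; auto; apply (sg_iter G HG); auto.
      * apply (orbital_conj f E (Nat.iter N h) (Nat.iter N hi)); auto using iter_inverses;
          apply (sg_PLo G HG), (sg_iter G HG); auto.
      * intros x Hx. destruct (Hsig x Hx) as [m [Hm ->]]. apply conj_orbital_strict_incl, Hm.
    + intros x [<-|Hx]; [exists N; split; auto|
      destruct (Hsig x Hx) as [m [Hm ->]]; exists m; split]; auto.
Qed.

End NestedConjugates.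

Lemma interval_into_itself_towers G f a b psi psi' : is_PL_subgroup G -> G f ->
  orbital_ends f a b ->
  G psi -> G psi' -> inverses psi psi' -> a <= psi a -> psi b <= b -> a < psi a \/ psi b < b ->
  forall N, has_tower_of_height G N.
Proof.
  intros HG Hf Hab Hpsi Hpsi' Hinv Ha Hb Hstrict. pose proof (sg_PLo G HG psi Hpsi) as Ppsi.
  pose proof Hab as [Ha0 [Hab' [Hb1 _]]].
  pose proof (PLo_lt psi Ppsi a b ltac:(lra) ltac:(lra) ltac:(lra)).
  assert (Hp0 : exists p0, (a < psi p0 < b) /\ ~ (a < p0 < b)).
  { destruct Hstrict; [exists a|exists b]; split; lra. }
  destruct Hp0 as [p0 [Hp0 Hp0']].
  apply (nested_conjugates_towers G HG f psi' psi (fun y => a < y < b) Hf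
    (orbital_of_ends f a b Hab)
    Hpsi' Hpsi (inverses_sym psi psi' Hinv)) with (p0 := p0); auto.
  intros y Hy. pose proof (PLo_lt psi Ppsi a y ltac:(lra) ltac:(lra) ltac:(lra)).
  pose proof (PLo_lt psi Ppsi y b ltac:(lra) ltac:(lra) ltac:(lra)). lra.
Qed.

Lemma orbital_ends_agree f w a b : orbital_ends f a b -> (forall y, a <= y <= b -> w y = f y) ->
  orbital_ends w a b.
Proof.
  intros [Ha [Hab [Hb [Hfa [Hfb Hmv]]]]] Hw.
  repeat split; auto; [rewrite Hw; auto; lra|rewrite Hw; auto; lra|].
  intros y Hy. rewrite Hw by lra. auto.
Qed.

Lemma orbital_ends_inverse f fi a b : inverses f fi -> orbital_ends f a b -> orbital_ends fi a b.
Proof.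
  intros Hinv [Ha [Hab [Hb [Hfa [Hfb Hmv]]]]].
  refine (conj Ha (conj Hab (conj Hb (conj _ (conj _ _)))));
    try (apply (inverses_fixed f fi); auto).
  intros y Hy. apply (inverses_moved f); auto.
Qed.

Lemma sg_down_mover G g y : is_PL_subgroup G -> G g -> 0 <= y <= 1 -> g y <> y ->
  exists h hi, G h /\ G hi /\ inverses h hi /\ (forall z, h z = z <-> g z = z) /\ h y < y.
Proof.
  intros HG Hg Hy Hgy. destruct (sg_inv G HG g Hg) as [gi [Hgi Hinv]].
  destruct (Rlt_le_dec (g y) y) as [Hlt|Hge].
  - exists g, gi. split; [auto|]. split; [auto|]. split; [auto|]. split; [tauto|auto].
  - exists gi, g. split; [auto|]. split; [auto|]. split; [apply inverses_sym; auto|]. split.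
    + intros z. split; [apply (inverses_fixed gi g); apply inverses_sym; auto|
        apply (inverses_fixed g gi); auto].
    + pose proof (PLo_maps_I gi (sg_PLo G HG gi Hgi) y Hy).
      apply Rnot_le_lt; intros Hle.
      pose proof (PLo_le g (sg_PLo G HG g Hg) y (gi y) ltac:(lra) Hle ltac:(lra)).
      rewrite (proj2 (Hinv y)) in *. lra.
Qed.

Section BelowMaximalOrbital.

Variable G : (R -> R) -> Prop.
Hypothesis HG : is_PL_subgroup G.
Hypothesis Hfinite : ~ forall N, has_tower_of_height G N.
Variables (g : R -> R) (c d : R).
Hypotheses (Hg : G g) (Hcd : orbital_ends g c d) (Hmax : ~ orbital_covers G c d).
Variables (f : R -> R) (a b : R).
Hypotheses (Hf : G f) (Hab : orbital_ends f a b) (Hca : c <= a)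
  (Hbd : b <= d) (Hproper : c < a \/ b < d).

Let Pf : PLo f := sg_PLo G HG f Hf.

Lemma inner_fixes_bottom : f c = c.
Proof.
  apply NNPP; intros Hfc. apply Hmax, (orbital_covers_of_moved_end G HG g); eauto.
Qed.

(* A slope other than 1 at [c] would give [f] an orbital [(c, x)] with [x < d], which [g] or its
   inverse pushes strictly into itself. *)
Lemma inner_identity_near_bottom : exists e, 0 < e /\ forall y, c <= y <= c + e -> f y = y.
Proof.
  pose proof Hcd as [Hc [Hcd' [Hd [Hgc [Hgd Hgmv]]]]].
  pose proof Hab as [Ha [Hab' [Hb [Hfa [Hfb Hfmv]]]]].
  pose proof inner_fixes_bottom as Hfc.
  destruct (germ_right f c Pf ltac:(lra) Hfc) as [al [e [Hal [He Gf]]]].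
  exists e. split; [auto|].
  destruct (Req_dec al 1) as [->|Hal1].
  { intros y Hy. replace y with (c + 1 * (y - c)) by ring. rewrite Gf by lra. ring. }
  exfalso. apply Hfinite.
  assert (Hfm : forall y, c < y <= c + e -> f y <> y).
  { intros y Hy. replace y with (c + 1 * (y - c)) by ring. rewrite Gf by lra.
    intros Heq. assert (Hz : (al - 1) * (y - c) = 0) by lra.
    apply Rmult_integral in Hz as [|]; lra. }
  set (q := c + Rmin e (d - c) / 2).
  pose proof (Rmin_l e (d - c)). pose proof (Rmin_r e (d - c)).
  assert (0 < Rmin e (d - c)) by (apply Rmin_glb_lt; lra).
  destruct (moved_point_orbital f q Pf) as [c' [x [Hends Hq]]].
  { split; [unfold q; lra|]. apply Hfm; unfold q; lra. }
  pose proof Hends as [Hc' [_ [Hx [Hfc' [Hfx Hmv]]]]].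
  assert (c' = c).
  { destruct (Rtotal_order c' c) as [Hlt|[Heq|Hgt]]; auto.
    - exfalso. apply (Hmv c); [unfold q in *; lra|auto].
    - exfalso. apply (Hfm c'); [unfold q in *; lra|auto]. }
  subst c'.
  assert (Hxd : x < d).
  { apply Rnot_le_lt; intros Hdx. destruct Hproper.
    - apply (Hmv a); [lra|auto].
    - apply (Hmv b); [lra|auto]. }
  destruct (sg_down_mover G g x HG Hg ltac:(lra)) as [h [hi [Hh [Hhi [Hinv [Hfix Hhx]]]]]].
  { apply Hgmv; unfold q in *; lra. }
  apply (interval_into_itself_towers G f c x h hi HG Hf Hends Hh Hhi Hinv); try lra.
  apply Hfix in Hgc. lra.
Qed.

Lemma inner_below_top : b < d.
Proof.
  pose proof Hcd as [Hc [Hcd' [Hd [Hgc [Hgd Hgmv]]]]].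
  pose proof Hab as [Ha [Hab' [Hb [Hfa [Hfb Hfmv]]]]].
  apply Rnot_le_lt; intros Hdb. replace b with d in * by lra.
  destruct Hproper as [Hca'|]; [|lra].
  apply Hfinite.
  destruct (sg_down_mover G g a HG Hg ltac:(lra)) as [h [hi [Hh [Hhi [Hinv [Hfix Hha]]]]]].
  { apply Hgmv; lra. }
  pose proof (PLo_inverse_lt h hi a (sg_PLo G HG h Hh) (sg_PLo G HG hi Hhi) Hinv ltac:(lra) Hha).
  assert (hi d = d) by (apply (inverses_fixed h hi); auto; apply Hfix; auto).
  apply (interval_into_itself_towers G f a d hi h HG Hf Hab Hhi Hh (inverses_sym h hi Hinv)); lra.
Qed.

(* Conjugating by a high power of [g] (or its inverse) moves [[a, b]] into the region near [c] where
   [f] is the identity, so the commutator agrees with [f^-1] on [[a, b]]. *)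
Lemma inner_orbital_of_commutator : exists w, derived G w /\ orbital_ends w a b.
Proof.
  pose proof Hcd as [Hc [Hcd' [Hd [Hgc [Hgd Hgmv]]]]].
  pose proof Hab as [Ha [Hab' [Hb [Hfa [Hfb Hfmv]]]]].
  destruct inner_identity_near_bottom as [e [He Hid]]. pose proof inner_below_top as Hbd'.
  destruct (sg_down_mover G g b HG Hg ltac:(lra)) as [h [hi [Hh [Hhi [Hinv [Hfix Hhb]]]]]].
  { apply Hgmv; lra. }
  pose proof (sg_PLo G HG h Hh) as Ph.
  destruct (iter_tends_to_fixed_point h hi c b Ph (sg_PLo G HG hi Hhi) Hinv ltac:(lra) Hb
    (proj2 (Hfix c) Hgc) Hhb) with (e := e) as [m Hm]; auto.
  { intros y Hy Hhy. apply (Hgmv y); [lra|]. apply Hfix; auto. }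
  destruct (sg_inv G HG f Hf) as [fi [Hfi Hinvf]].
  exists (fun x => fi (Nat.iter m hi (f (Nat.iter m h x)))). split.
  - apply (derived_comm G (Nat.iter m hi) fi (Nat.iter m h) f); try apply (sg_iter G HG); auto.
    + apply iter_inverses, inverses_sym, Hinv.
    + apply inverses_sym, Hinvf.
  - apply (orbital_ends_agree fi); [apply (orbital_ends_inverse f); auto|].
    intros y Hy. f_equal.
    pose proof (iter_fixed h c m (proj2 (Hfix c) Hgc)).
    pose proof (PLo_le _ (sg_PLo G HG _ (sg_iter G HG h m Hh)) c y
      ltac:(lra) ltac:(lra) ltac:(lra)).
    pose proof (PLo_le _ (sg_PLo G HG _ (sg_iter G HG h m Hh)) y b
      ltac:(lra) ltac:(lra) ltac:(lra)).
    rewrite Hid by lra. apply (iter_inverses h hi m Hinv).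
Qed.

End BelowMaximalOrbital.

Lemma interval_incl_ends a b c d : a < b -> set_incl (fun y => a < y < b) (fun y => c < y < d) ->
  c <= a /\ b <= d.
Proof.
  intros Hab Hincl. split; apply Rnot_lt_le; intros Hlt.
  - pose proof (Rmin_l b c). pose proof (Rmin_r b c).
    assert (a < Rmin b c) by (apply Rmin_glb_lt; lra).
    specialize (Hincl ((a + Rmin b c) / 2) ltac:(lra)). simpl in Hincl. lra.
  - pose proof (Rmax_l a d). pose proof (Rmax_r a d).
    assert (Rmax a d < b) by (apply Rmax_lub_lt; lra).
    specialize (Hincl ((Rmax a d + b) / 2) ltac:(lra)). simpl in Hincl. lra.
Qed.

Lemma derived_realizes_suborbital G g c d f A : is_PL_subgroup G ->
  ~ (forall N, has_tower_of_height G N) ->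
  G g -> orbital_ends g c d -> ~ orbital_covers G c d ->
  G f -> orbital f A -> set_incl A (fun y => c < y < d) -> ~ set_eq A (fun y => c < y < d) ->
  exists w, derived G w /\ orbital w A.
Proof.
  intros HG Hfinite Hg Hcd Hmax Hf HA Hincl Hne.
  destruct (orbital_ends_of_orbital f A (sg_PLo G HG f Hf) HA) as [a [b [Hab HAab]]].
  destruct (interval_incl_ends a b c d) as [Hca Hbd];
    [apply Hab|intros y Hy; apply Hincl, HAab, Hy|].
  assert (Hproper : c < a \/ b < d).
  { destruct (Rlt_or_le c a) as [|Hac]; [left; auto|].
    destruct (Rlt_or_le b d) as [|Hdb]; [right; auto|].
    exfalso. apply Hne. intros y. rewrite (HAab y).
    replace a with c by lra. replace b with d by lra. tauto. }
  destruct (inner_orbital_of_commutator G HG Hfinite g c d Hg Hcd Hmax f a b Hf Hab Hca Hbd Hproper)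
    as [w [Hw Hwab]].
  exists w. split; auto. apply (orbital_set_eq w _ A (orbital_of_ends w a b Hwab)).
  intros y. specialize (HAab y). tauto.
Qed.

Lemma derived_has_tower G m : is_PL_subgroup G -> has_tower_of_height G (S m) ->
  ~ has_tower_of_height G (S (S m)) -> has_tower_of_height (derived G) m.
Proof.
  intros HG [t [Ht Hlen]] Hno.
  destruct (tower_top G t Ht ltac:(lia)) as [k [Hk Htop]].
  destruct (tower_nth G t k Ht Hk) as [Hg HB].
  destruct (orbital_ends_of_orbital _ _ (sg_PLo G HG _ Hg) HB) as [c [d [Hcd HBcd]]].
  assert (Hmax : ~ orbital_covers G c d).
  { intros Hcov. apply Hno. rewrite <- Hlen. apply (tower_extend_covering G t k c d); auto. }
  destruct (tower_remove G t k Ht Hk) as [t' [Ht' [Hlen' Hfrom]]].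
  replace m with (length t') by lia.
  apply (tower_relabel G (derived G) t' Ht'). intros x Hx.
  destruct (Hfrom x Hx) as [j [Hj [Hjk ->]]].
  destruct (tower_nth G t j Ht Hj) as [Hf HA].
  destruct (tower_pair G t j k Ht Hj Hk Hjk) as [Hne _].
  apply (derived_realizes_suborbital G _ c d _ _ HG (fun Hall => Hno (Hall _)) Hg Hcd Hmax Hf HA).
  - intros y Hy. apply HBcd, (Htop _ (nth_In t (fun _ => False, fun x => x) Hj)), Hy.
  - intros Heq. apply Hne. intros y. rewrite (Heq y), (HBcd y). tauto.
Qed.

Lemma derived_orbital_start_moved G h c d : is_PL_subgroup G -> derived G h -> orbital_ends h c d ->
  exists f, G f /\ f c <> c.
Proof.
  intros HG Hh [Hc [Hcd [Hd [_ [_ Hmv]]]]]. apply NNPP; intros Hnone.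
  destruct (derived_germ_one G c h HG) as [e [He Hid]]; auto; [|lra|].
  { intros f Hf. apply NNPP; intros Hfc. apply Hnone; eauto. }
  set (t := Rmin e (d - c) / 2). pose proof (Rmin_l e (d - c)). pose proof (Rmin_r e (d - c)).
  assert (0 < Rmin e (d - c)) by (apply Rmin_glb_lt; lra).
  apply (Hmv (c + 1 * t)); [unfold t; lra|]. rewrite Hid by (unfold t; lra). ring.
Qed.

Lemma derived_tower_bound G m : is_PL_subgroup G -> ~ has_tower_of_height G (S (S m)) ->
  ~ has_tower_of_height (derived G) (S m).
Proof.
  intros HG Hno [t [Ht Hlen]].
  destruct (tower_top (derived G) t Ht ltac:(lia)) as [k [Hk Htop]].
  destruct (tower_nth (derived G) t k Ht Hk) as [Hh HB].
  pose proof (derived_incl G HG _ Hh) as HhG.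
  destruct (orbital_ends_of_orbital _ _ (sg_PLo G HG _ HhG) HB) as [c [d [Hcd HBcd]]].
  apply Hno. rewrite <- Hlen. apply (tower_extend_covering G t k c d); auto.
  - apply (tower_incl (derived G)); auto. apply derived_incl, HG.
  - apply (orbital_covers_of_moved_end G HG _ c d HhG Hcd).
    apply (derived_orbital_start_moved G _ c d HG Hh Hcd).
Qed.

Theorem lemma18 (G : (R -> R) -> Prop) (n : nat) :
  is_PL_subgroup G -> (1 <= n)%nat -> depth_eq G n ->
  is_PL_subgroup (derived G) /\ depth_eq (derived G) (n - 1).
Proof.
  intros HG Hn [Hlow Hno]. destruct n as [|m]; [lia|]. replace (S m - 1)%nat with m by lia.
  split; [apply derived_is_PL_subgroup, HG|split].
  - apply derived_has_tower; auto.
  - apply derived_tower_bound; auto.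
Qed.
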